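(* For all positive integers $d,t,k,w$ with $dt+1\le k$, there is a $t$-private $k$-server PIR protocol for databases of $N$ records, each record being $w(k-dt)\lceil\log_2k\rceil$ bits long, such that the upload cost is $O(k^3\log k\cdot N^{1/d})$ bits and the download cost is $wk\lceil\log_2k\rceil$ bits. Consequently its download rate is $1-dt/k$.
   Context: A $t$-private $k$-server private information retrieval (PIR) protocol for databases in $\mathcal{Y}^N$ (replicated at all $k$ servers) lets a client retrieve the $i$-th symbol for any $i\in[N]$ so that the client's messages to any $t$ servers have a distribution independent of $i$. Equivalently it is a $t$-private $k$-server HSS with $m=1$ input $i\in[N]$ for the class of all functions $f:[N]\to\mathcal{Y}$ (the database): the client shares $i$ with $\mathsf{Share}$, each server returns $\mathsf{Eval}(f,j,\text{its share})$, and the client runs $\mathsf{Rec}$ to obtain $f(i)$ with probability 1. Upload cost is the total bit length of the input shares; download cost is the total bit length of the output shares; download rate is $\log_2|\mathcal{Y}|$ divided by the download cost. *)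

From mathcomp Require Import all_boot.
From Stdlib Require Import Reals.
Set Implicit Arguments.
Unset Strict Implicit.
Unset Printing Implicit Defensive.

(* A k-server PIR protocol (= HSS with one input i : 'I_N for the class of
   all databases f : 'I_N -> Y), where Y = L-bit records.
   The client's randomness is uniform over a finite nonempty type [rand]. *)
Record PIR (k N L : nat) := MkPIR {
  rand : finType;
  share : 'I_N -> rand -> 'I_k -> seq bool;
  eval : 'I_k -> {ffun 'I_N -> L.-tuple bool} -> seq bool -> seq bool;
  recon : 'I_N -> rand -> ('I_k -> seq bool) -> L.-tuple bool
}.

Arguments rand {k N L} p.
Arguments share {k N L} p _ _ _.
Arguments eval {k N L} p _ _ _.
Arguments recon {k N L} p _ _ _.

Section PIRdefs.
Variables (k N L : nat) (P : PIR k N L).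

Definition pir_nonempty_rand : Prop := 0 < #|rand P|.

Definition pir_correct : Prop :=
  forall (f : {ffun 'I_N -> L.-tuple bool}) (i : 'I_N) (r : rand P),
    recon P i r (fun j => eval P j f (share P i r j)) = f i.

(* t-privacy: for every set T of at most t servers, the joint distribution of
   the messages to T (under uniform r) does not depend on i. *)
Definition pir_private (t : nat) : Prop :=
  forall (T : {set 'I_k}), #|T| <= t ->
  forall (i i' : 'I_N) (v : 'I_k -> seq bool),
    #|[set r : rand P | [forall j in T, share P i r j == v j]]| =
    #|[set r : rand P | [forall j in T, share P i' r j == v j]]|.

Definition is_PIR (t : nat) : Prop :=
  [/\ pir_nonempty_rand, pir_correct & pir_private t].

Definition upload : nat :=
  \max_(i : 'I_N) \max_(r : rand P) \sum_(j < k) size (share P i r j).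

Definition download : nat :=
  \max_(f : {ffun 'I_N -> L.-tuple bool}) \max_(i : 'I_N) \max_(r : rand P)
    \sum_(j < k) size (eval P j f (share P i r j)).

(* download rate = log2 |Y| / download cost = L / download *)
Definition download_rate : R := (INR L / INR download)%R.

End PIRdefs.

Definition clog2 (k : nat) : nat := up_log 2 k.

From Stdlib Require Import Reals Lra.
From mathcomp Require Import all_boot all_algebra finfield zify.
Set Implicit Arguments.
Unset Strict Implicit.
Unset Printing Implicit Defensive.
Import GRing.Theory.

(* Encode the index i injectively as code i : 'I_d -> 'I_n, with n minimal
   such that n^d >= N, so that record f_i is the value at i of the degree-d
   polynomial
     f(z) = \sum_i f_i \prod_x z_(x, code i x)
   in the d*n selector variables z_(x,y) = [code i x = y].  Computations
   take place over A = F[X] modulo X^l, F = GF(2^m) containing k distinct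
   evaluation points alpha_j, and every selector s is shared as
     P(lam) = s lam^t + (1 - X lam) R(lam),   deg R < t, R uniform.
   Any t shares are uniform: adding to R an interpolated correction maps the
   shares of one index onto those of another.  Since
   W(lam) = \sum_(c < l) (X lam)^c inverts 1 - X lam modulo X^l, the
   X^(l-1)-coefficient of W(alpha_j) f(P(alpha_j)), which server j returns,
   is the value at alpha_j of a polynomial over F of degree < d t + l whose
   top l coefficients are the l symbols of f_i.  Hence the k = d t + l
   answers of m = ceil(log2 k) bits determine these l symbols: rate
   l / k = 1 - d t / k, records of w l symbols being handled in w blocks.
   The upload is k (d n) (l m) bits with n <= 2 N^(1/d) and m <= 4 ln k. *)

Section RealBounds.
Local Open Scope R_scope.

Lemma INR_expn a b : INR (a ^ b) = INR a ^ b.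
Proof. by elim: b => [|b IH]; rewrite ?expn0 // expnS mult_INR IH. Qed.

Lemma INR_prednK n : (0 < n)%N -> INR n = INR n.-1 + 1.
Proof. by move=> n_gt0; rewrite -{1}(prednK n_gt0) S_INR. Qed.

Lemma clog2_le_ln k : (2 <= k)%N -> INR (clog2 k) <= 4 * ln (INR k).
Proof.
move=> k_ge2; rewrite /clog2; set m := up_log 2 k.
have m_gt0 : (0 < m)%N by rewrite up_log_gt0.
have hk : 2 <= INR k by apply: (le_INR 2); apply/leP.
have ln2_le : ln 2 <= ln (INR k).
  by case: (Rle_lt_or_eq_dec _ _ hk) => [lt2k|<-]; [left; apply: ln_increasing; lra|lra].
have : ln (2 ^ m.-1) < ln (INR k).
  apply: ln_increasing; first by apply: pow_lt; lra.
  by rewrite -[2]/(INR 2) -INR_expn; apply/lt_INR/ltP/up_log_gtn.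
rewrite ln_pow; last lra.
have := ln_lt_2; have := pos_INR m.-1; rewrite (INR_prednK m_gt0); nra.
Qed.

Lemma INR_pred_root_lt n d N : (0 < d)%N -> (0 < N)%N -> (n.-1 ^ d < N)%N ->
  INR n.-1 < Rpower (INR N) (/ INR d).
Proof.
move=> d_gt0 N_gt0 lt_nN.
have hd : 0 < INR d by apply/lt_0_INR/ltP.
have hN : 0 < INR N by apply/lt_0_INR/ltP.
have root_pow : Rpower (INR N) (/ INR d) ^ d = INR N.
  by rewrite -Rpower_pow ?Rpower_mult ?Rinv_l ?Rpower_1 //; [lra|apply: exp_pos].
apply: Rnot_le_lt => le_root.
have : Rpower (INR N) (/ INR d) ^ d <= INR n.-1 ^ d.
  by apply: pow_incr; split; [left; apply: exp_pos|].
by rewrite root_pow -INR_expn; have := lt_INR _ _ (elimT ltP lt_nN); lra.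
Qed.

Lemma one_le_Rpower N d : (0 < N)%N -> (0 < d)%N -> 1 <= Rpower (INR N) (/ INR d).
Proof.
move=> N_gt0 d_gt0; rewrite -(Rpower_O (INR N)); last by apply/lt_0_INR/ltP.
apply: Rle_Rpower; first by apply: (le_INR 1); apply/leP.
by left; apply/Rinv_0_lt_compat/lt_0_INR/ltP.
Qed.

Lemma ceil_root_le_Rpower n d N : (0 < d)%N -> (0 < N)%N -> (0 < n)%N ->
  (n.-1 ^ d < N)%N -> INR n <= 2 * Rpower (INR N) (/ INR d).
Proof.
move=> d_gt0 N_gt0 n_gt0 lt_N; rewrite (INR_prednK n_gt0).
by have := INR_pred_root_lt d_gt0 N_gt0 lt_N; have := one_le_Rpower N_gt0 d_gt0; lra.
Qed.

Lemma upload_bound (k m l d n : nat) (L P : R) :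
  INR m <= 4 * L -> (l <= k)%N -> (d <= k)%N -> INR n <= 2 * P ->
  INR (k * (m * l * (d * n))) <= 8 * INR k ^ 3 * L * P.
Proof.
move=> le_m le_l le_d le_n; rewrite !mult_INR.
have k0 := pos_INR k; have m0 := pos_INR m; have l0 := pos_INR l.
have d0 := pos_INR d; have n0 := pos_INR n.
have le_l' : INR l <= INR k by apply/le_INR/leP.
have le_d' : INR d <= INR k by apply/le_INR/leP.
have ml : INR m * INR l <= 4 * L * INR k by apply: Rmult_le_compat.
have dn : INR d * INR n <= INR k * (2 * P) by apply: Rmult_le_compat.
have : INR m * INR l * (INR d * INR n) <= (4 * L * INR k) * (INR k * (2 * P)).
  by apply: Rmult_le_compat => //; apply: Rmult_le_pos.
move/(Rmult_le_compat_l (INR k) _ _ k0)/Rle_trans; apply; right; ring.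
Qed.

Lemma rate_eq (w l m k dt : nat) : (0 < w)%N -> (0 < m)%N -> (0 < k)%N ->
  (dt + l)%N = k -> INR (w * l * m) / INR (k * (m * w)) = 1 - INR dt / INR k.
Proof.
move=> w_gt0 m_gt0 k_gt0 k_eq.
have nz x : (0 < x)%N -> INR x <> 0 by move=> x_gt0; apply/not_0_INR/eqP; rewrite -lt0n.
have INR_k : INR k = INR dt + INR l by rewrite -k_eq plus_INR.
rewrite !mult_INR INR_k; field.
by rewrite -INR_k; split; [|split]; apply: nz.
Qed.

End RealBounds.

Lemma exists_ceil_root d N : (0 < d)%N -> (0 < N)%N ->
  exists n, [/\ (0 < n)%N, (N <= n ^ d)%N & (n.-1 ^ d < N)%N].
Proof.
move=> d_gt0 N_gt0.
have ex_n : exists n, (N <= n ^ d)%N by exists N; rewrite -{1}(expn1 N) leq_pexp2l.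
case: (ex_minnP ex_n) => n le_N_nd min_n.
have n_gt0 : (0 < n)%N.
  by rewrite lt0n; apply: contraTneq le_N_nd => ->; rewrite exp0n // -ltnNge.
exists n; split => //; rewrite ltnNge; apply/negP => /min_n.
by rewrite leqNgt ltn_predL n_gt0.
Qed.

(* Imported only after the lemmas on Stdlib reals: its [ring] and [field]
   supersede Stdlib's and do not apply to [R]. *)
From mathcomp Require Import ring.

Local Open Scope ring_scope.

Lemma size_polyM_le (R : nzRingType) (p q : {poly R}) m n :
  (size p <= m)%N -> (size q <= n)%N -> (size (p * q)%R <= (m + n).-1)%N.
Proof. by move=> ? ?; apply: leq_trans (size_polyMleq _ _) _; lia. Qed.

Section TakePoly.
Variables (R : nzRingType) (l : nat).

Lemma take_poly_take (p : {poly R}) : take_poly l (take_poly l p) = take_poly l p.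
Proof. exact/take_poly_id/size_take_poly. Qed.

Lemma take_polyM (p q : {poly R}) :
  take_poly l (p * q) = take_poly l (take_poly l p * take_poly l q).
Proof.
apply/polyP=> e; rewrite !coef_take_poly; case: ifP => // lt_e_l; rewrite !coefM.
apply: eq_bigr => j _; rewrite !coef_take_poly.
by rewrite !(leq_ltn_trans _ lt_e_l) ?leq_subr // -ltnS.
Qed.

Lemma take_polyMl (p q : {poly R}) :
  take_poly l (p * q) = take_poly l (take_poly l p * q).
Proof. by rewrite take_polyM [RHS]take_polyM take_poly_take. Qed.

Lemma take_polyMr (p q : {poly R}) :
  take_poly l (p * q) = take_poly l (p * take_poly l q).
Proof. by rewrite take_polyM [RHS]take_polyM take_poly_take. Qed.

Lemma take_poly_prod (I : Type) (s : seq I) (P : pred I) (F : I -> {poly R}) :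
  take_poly l (\prod_(i <- s | P i) F i) =
  take_poly l (\prod_(i <- s | P i) take_poly l (F i)).
Proof.
elim/big_rec2: _ => [//|i p q _ IH].
by rewrite take_polyMr IH -take_polyMr take_polyMl.
Qed.

Lemma coef_take_poly_last (p : {poly R}) : (0 < l)%N ->
  (take_poly l p)`_l.-1 = p`_l.-1.
Proof. by move=> l_gt0; rewrite coef_take_poly ltn_predL l_gt0. Qed.

Lemma take_horner_take_coefs t (D : {poly {poly R}}) x : (size D <= t)%N ->
  take_poly l (\poly_(b < t) take_poly l D`_b).[x] = take_poly l D.[x].
Proof.
move=> sD; rewrite (horner_coef_wide _ (size_poly _ _)) (horner_coef_wide _ sD).
by rewrite !take_poly_sum; apply: eq_bigr => b _; rewrite coef_poly ltn_ord -take_polyMl.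
Qed.

End TakePoly.

Section Masking.
Variables (R : comNzRingType) (l : nat).
Local Notation A := {poly R}.

Definition mask_poly : {poly A} := 1 - ('X : A)%:P * 'X.

Definition geom_sum (x : A) : A := \sum_(c < l) ('X * x) ^+ c.

Lemma mul_mask_geom_sum (x : A) : (1 - 'X * x) * geom_sum x = 1 - ('X * x) ^+ l.
Proof.
rewrite -(expr1n _ l) subrXX expr1n; congr (_ * _).
by apply: eq_bigr => c _; rewrite expr1n mul1r.
Qed.

Definition masked (D : nat) (c : A) (p : {poly A}) :=
  exists2 H : {poly A}, (size H <= D)%N & p = c%:P * 'X^D + mask_poly * H.

Lemma size_mask_poly : (size mask_poly <= 2)%N.
Proof.
apply: leq_trans (size_polyD _ _) _; rewrite size_polyN size_poly1 geq_max /=.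
exact: size_polyM_le (size_polyC_leq1 _) (eq_leq (size_polyX _)).
Qed.

Lemma masked0 D : masked D 0 0.
Proof. by exists 0; rewrite ?size_poly0 // mulr0 mul0r addr0. Qed.

Lemma masked1 : masked 0 1 1.
Proof. by exists 0; rewrite ?size_poly0 // mulr0 addr0 expr0 mulr1. Qed.

Lemma maskedD D c1 c2 p1 p2 :
  masked D c1 p1 -> masked D c2 p2 -> masked D (c1 + c2) (p1 + p2).
Proof.
move=> [H1 sH1 ->] [H2 sH2 ->]; exists (H1 + H2); last by rewrite polyCD; ring.
by apply: leq_trans (size_polyD _ _) _; rewrite geq_max sH1 sH2.
Qed.

Lemma maskedZ D a c p : masked D c p -> masked D (a * c) (a%:P * p).
Proof.
move=> [H sH ->]; exists (a%:P * H); last by rewrite polyCM; ring.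
exact: size_polyM_le (size_polyC_leq1 _) sH.
Qed.

Lemma masked_sum D (I : Type) (s : seq I) (P : pred I) (c : I -> A) (p : I -> {poly A}) :
  (forall i, P i -> masked D (c i) (p i)) ->
  masked D (\sum_(i <- s | P i) c i) (\sum_(i <- s | P i) p i).
Proof.
move=> mp; elim/big_rec2: _ => [|i c' p' Pi]; first exact: masked0.
exact: maskedD (mp i Pi).
Qed.

Lemma maskedM D1 D2 c1 c2 p1 p2 :
  masked D1 c1 p1 -> masked D2 c2 p2 -> masked (D1 + D2) (c1 * c2) (p1 * p2).
Proof.
move=> [H1 sH1 ->] [H2 sH2 ->].
exists (c1%:P * 'X^D1 * H2 + H1 * (c2%:P * 'X^D2) + mask_poly * H1 * H2).
  have sCX D c : (size (c%:P * 'X^D : {poly A})%R <= D.+1)%N.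
    by apply: size_polyM_le (size_polyC_leq1 _) _; rewrite size_polyXn.
  have s1 := size_polyM_le (sCX D1 c1) sH2.
  have s2 := size_polyM_le sH1 (sCX D2 c2).
  have s3 := size_polyM_le (size_polyM_le size_mask_poly sH1) sH2.
  apply: leq_trans (size_polyD _ _) _; rewrite geq_max (leq_trans s3) ?andbT; last lia.
  apply: leq_trans (size_polyD _ _) _; rewrite geq_max.
  by rewrite (leq_trans s1) ?(leq_trans s2) //; lia.
by rewrite (exprD 'X D1 D2) polyCM; ring.
Qed.

Lemma masked_prod D (I : Type) (s : seq I) (c : I -> A) (p : I -> {poly A}) :
  (forall i, masked D (c i) (p i)) ->
  masked (size s * D) (\prod_(i <- s) c i) (\prod_(i <- s) p i).
Proof.
move=> mp; elim: s => [|i s IH]; first by rewrite !big_nil; exact: masked1.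
by rewrite !big_cons mulSn; apply: maskedM.
Qed.

Lemma coef_mul_geom_term (c : A) (a : R) (i : 'I_l) :
  (c * ('X * a%:P) ^+ i)`_l.-1 = c`_(l.-1 - i) * a ^+ i.
Proof.
rewrite exprMn -rmorphXn mulrA coefMC coefMXn.
by rewrite ltnNge -ltnS prednK ?(leq_ltn_trans _ (ltn_ord i)) // ltn_ord.
Qed.

Lemma masked_decode D c p : (0 < l)%N -> masked D c p ->
  exists G : {poly R}, [/\ (size G <= D + l)%N,
    forall e, (e < l)%N -> G`_(D + e) = c`_(l.-1 - e) &
    forall a : R, (geom_sum a%:P * p.[a%:P])`_l.-1 = G.[a]].
Proof.
move=> l_gt0 [H sH ->].
exists (\poly_(e < D + l) (if (e < D)%N then (H`_e)`_l.-1 else c`_(l.-1 - (e - D)))).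
split=> [|e lt_e_l|a].
- exact: size_poly.
- by rewrite coef_poly ltn_add2l lt_e_l ltnNge leq_addr addKn.
have -> : geom_sum a%:P * (c%:P * 'X^D + mask_poly * H).[a%:P]
    = c * a%:P ^+ D * geom_sum a%:P + (1 - ('X * a%:P) ^+ l) * H.[a%:P].
  by rewrite /mask_poly !hornerE -mul_mask_geom_sum; ring.
have vanish : (('X * a%:P) ^+ l * H.[a%:P])`_l.-1 = 0.
  by rewrite exprMn -mulrA coefXnM ltn_predL l_gt0.
rewrite coefD mulrBl mul1r coefB vanish subr0.
rewrite (horner_coef_wide _ (size_poly _ _)) big_split_ord /= addrC.
congr (_ + _).
  rewrite /geom_sum mulr_sumr coef_sum; apply: eq_bigr => i _.
  rewrite coef_poly ltn_add2l ltn_ord ltnNge leq_addr /= addKn.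
  by rewrite coef_mul_geom_term -rmorphXn coefMC exprD mulrA.
rewrite (horner_coef_wide _ sH) coef_sum; apply: eq_bigr => i _.
by rewrite coef_poly ltn_addr // ltn_ord -rmorphXn coefMC.
Qed.

End Masking.

Arguments mask_poly {R}.

Section Lagrange.
Variables (F : fieldType) (k : nat) (x : 'I_k -> F).
Hypothesis x_inj : injective x.

Definition lagrange_on (T : {set 'I_k}) (j : 'I_k) : {poly F} :=
  let p := \prod_(i in T :\ j) ('X - (x i)%:P) in p.[x j]^-1 *: p.

Lemma size_lagrange_on (T : {set 'I_k}) j :
  j \in T -> (size (lagrange_on T j) <= #|T|)%N.
Proof.
move=> jT; apply: leq_trans (size_scale_leq _ _) _.
by rewrite -big_enum /= size_prod_XsubC -cardE (cardsD1 j T) jT.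
Qed.

Lemma horner_lagrange_on (T : {set 'I_k}) j i :
  i \in T -> (lagrange_on T j).[x i] = (j == i)%:R.
Proof.
move=> iT; rewrite hornerZ; have [<-|neq_ji] := eqVneq j i.
  rewrite mulVf // horner_prod; apply/prodf_neq0 => i'.
  by rewrite in_setD1 hornerXsubC subr_eq0 inj_eq // => /andP[+ _]; rewrite eq_sym.
suff -> : (\prod_(i' in T :\ j) ('X - (x i')%:P)).[x i] = 0 by rewrite mulr0.
rewrite horner_prod (bigD1 i) /=; last by rewrite in_setD1 eq_sym neq_ji.
by rewrite hornerXsubC subrr mul0r.
Qed.

Definition interpolate (y : 'I_k -> F) : {poly F} := \sum_j y j *: lagrange_on setT j.

Lemma horner_interpolate y j : (interpolate y).[x j] = y j.
Proof.
rewrite horner_sum (bigD1 j) //= big1 => [|i neq_ij].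
  by rewrite hornerZ horner_lagrange_on ?inE // eqxx mulr1 addr0.
by rewrite hornerZ horner_lagrange_on ?inE // (negbTE neq_ij) mulr0.
Qed.

Lemma size_interpolate y : (size (interpolate y) <= k)%N.
Proof.
apply: leq_trans (size_sum _ _ _) _; apply/bigmax_leqP => j _.
apply: leq_trans (size_scale_leq _ _) _.
by rewrite -[k in (_ <= k)%N]card_ord -cardsT size_lagrange_on ?inE.
Qed.

Lemma interpolate_unique (y : 'I_k -> F) (G : {poly F}) :
  (size G <= k)%N -> (forall j, G.[x j] = y j) -> G = interpolate y.
Proof.
move=> sG Gy; apply/eqP; rewrite -subr_eq0; apply/eqP.
apply: (@roots_geq_poly_eq0 _ _ [seq x j | j <- enum 'I_k]).
- by apply/allP => _ /mapP[j _ ->]; rewrite /root !hornerE Gy horner_interpolate subrr.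
- by rewrite map_inj_uniq ?enum_uniq.
rewrite size_map size_enum_ord; apply: leq_trans (size_polyD _ _) _.
by rewrite size_polyN geq_max sG size_interpolate.
Qed.

End Lagrange.

Section RowPoly.
Variables (R : nzRingType) (l : nat).

Lemma rVpoly_poly_rV (p : {poly R}) : rVpoly (poly_rV p : 'rV_l) = take_poly l p.
Proof.
apply/polyP => e; rewrite coef_rVpoly coef_take_poly.
by case: insubP => [i -> <-|/negbTE -> //]; rewrite mxE.
Qed.

Lemma poly_rV_take (p : {poly R}) : poly_rV (take_poly l p) = poly_rV p :> 'rV_l.
Proof. by apply/rowP => i; rewrite !mxE coef_take_poly ltn_ord. Qed.

Lemma eq_poly_rV (p q : {poly R}) :
  take_poly l p = take_poly l q -> poly_rV p = poly_rV q :> 'rV_l.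
Proof. by move=> eq_pq; rewrite -poly_rV_take eq_pq poly_rV_take. Qed.

End RowPoly.

Section Scheme.
Variables (F : fieldType) (l t d n N : nat) (code : 'I_N -> {ffun 'I_d -> 'I_n}).
Hypotheses (l_gt0 : (0 < l)%N) (code_inj : injective code).
Local Notation A := {poly F}.
Local Notation cell := ('I_d * 'I_n)%type.

(* The t coefficients of each noise polynomial R, every one an element of
   F[X] modulo X^l stored as its l coefficients. *)
Definition noise_t := {ffun cell -> 'rV['rV[F]_l]_t}.
Definition share_t := {ffun cell -> 'rV[F]_l}.

Definition sel (i : 'I_N) (z : cell) : A := (z.2 == code i z.1)%:R.

Definition noise_poly (r : noise_t) z : {poly A} := rVpoly (map_mx rVpoly (r z)).

Definition share_poly i r z : {poly A} := (sel i z)%:P * 'X^t + mask_poly * noise_poly r z.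

Definition share_at i r (a : F) : share_t := [ffun z => poly_rV (share_poly i r z).[a%:P]].

Definition answer_at (db : 'I_N -> 'rV[F]_l) (a : F) (s : share_t) : F :=
  (geom_sum l a%:P *
   \sum_i rVpoly (db i) * \prod_(x < d) rVpoly (s (x, code i x)))`_l.-1.

Lemma sum_sel_prod (c : 'I_N -> A) i0 :
  \sum_i c i * \prod_(x < d) sel i0 (x, code i x) = c i0.
Proof.
rewrite (bigD1 i0) //= big1 => [|x _]; last by rewrite /sel /= eqxx.
rewrite mulr1 big1 ?addr0 // => i neq_i_i0.
have [x neq_code] : exists x, code i x != code i0 x.
  apply/existsP; rewrite -negb_forall; apply: contra neq_i_i0 => /forallP eq_code.
  by apply/eqP/code_inj/ffunP => x; apply/eqP.
by rewrite (bigD1 x) //= /sel /= (negbTE neq_code) mul0r mulr0.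
Qed.

Lemma masked_share_poly i r z : masked t (sel i z) (share_poly i r z).
Proof. by exists (noise_poly r z); first exact: size_poly. Qed.

Lemma answer_at_share (db : 'I_N -> 'rV[F]_l) i0 r :
  exists G : {poly F}, [/\ (size G <= d * t + l)%N,
   forall e : 'I_l, G`_(d * t + (l.-1 - e)) = db i0 0 e &
   forall a, answer_at db a (share_at i0 r a) = G.[a]].
Proof.
pose p := \sum_i (rVpoly (db i))%:P * \prod_(x < d) share_poly i0 r (x, code i x).
have masked_p : masked (d * t) (rVpoly (db i0)) p.
  rewrite -(sum_sel_prod (fun i => rVpoly (db i)) i0); apply: masked_sum => i _.
  apply: maskedZ.
  have := masked_prod (enum 'I_d) (fun x => masked_share_poly i0 r (x, code i x)).
  by rewrite size_enum_ord !big_enum.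
have [G [sG coefG evalG]] := masked_decode l_gt0 masked_p.
exists G; split => // [e|a].
  have lt_e_l := ltn_ord e.
  by rewrite coefG ?subKn ?coef_rVpoly_ord //; lia.
rewrite -evalG /answer_at -[LHS]coef_take_poly_last // -[RHS]coef_take_poly_last //.
apply: (congr1 (fun q => q`_l.-1)).
rewrite take_polyMr [in RHS]take_polyMr; congr (take_poly l (_ * _)).
rewrite horner_sum !take_poly_sum; apply: eq_bigr => i _.
rewrite hornerM hornerC horner_prod take_polyMr [RHS]take_polyMr.
congr (take_poly l (_ * _)); rewrite take_poly_prod [RHS]take_poly_prod.
by congr (take_poly l _); apply: eq_bigr => x _; rewrite ffunE rVpoly_poly_rV take_poly_take.
Qed.

Variables (k : nat) (alpha : 'I_k -> F).
Hypothesis alpha_inj : injective alpha.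

(* Interpolates on T the defect (sel i - sel i') lam^t W(lam), so that adding
   it to the noise turns the shares of i' at T into those of i modulo X^l. *)
Definition shift_poly i i' (T : {set 'I_k}) z : {poly A} :=
  \sum_(j in T) ((sel i z - sel i' z) * (alpha j)%:P ^+ t * geom_sum l (alpha j)%:P)%:P
                * map_poly polyC (lagrange_on alpha T j).

Definition shift i i' T : noise_t := [ffun z => \row_b poly_rV (shift_poly i i' T z)`_b].

Lemma size_shift_poly i i' (T : {set 'I_k}) z :
  (#|T| <= t)%N -> (size (shift_poly i i' T z) <= t)%N.
Proof.
move=> card_T; apply: leq_trans (size_sum _ _ _) _; apply/bigmax_leqP => j jT.
apply: leq_trans (size_polyM_le (size_polyC_leq1 _) (leqnn _)) _.
by rewrite size_map_polyC /= (leq_trans (size_lagrange_on alpha jT)).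
Qed.

Lemma horner_shift_poly i i' (T : {set 'I_k}) z j : j \in T ->
  (shift_poly i i' T z).[(alpha j)%:P] =
  (sel i z - sel i' z) * (alpha j)%:P ^+ t * geom_sum l (alpha j)%:P.
Proof.
move=> jT; rewrite horner_sum (bigD1 j) //= big1 => [|j' /andP[_ neq_j'j]].
  by rewrite hornerM hornerC horner_map horner_lagrange_on // eqxx mulr1 addr0.
by rewrite hornerM hornerC horner_map horner_lagrange_on // (negbTE neq_j'j) mulr0.
Qed.

Lemma noise_poly_shift r i i' T z :
  noise_poly (r + shift i i' T) z =
  noise_poly r z + \poly_(b < t) take_poly l (shift_poly i i' T z)`_b.
Proof.
rewrite /noise_poly ffunE map_mxD linearD /=; congr (_ + _).
apply/polyP => b; rewrite coef_rVpoly coef_poly.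
case: insubP => [b' -> <-|/negbTE -> //].
by rewrite ffunE !mxE rVpoly_poly_rV.
Qed.

Lemma share_at_shift i i' (T : {set 'I_k}) r j : (#|T| <= t)%N -> j \in T ->
  share_at i' (r + shift i i' T) (alpha j) = share_at i r (alpha j).
Proof.
move=> card_T jT; apply/ffunP => z; rewrite !ffunE; apply: eq_poly_rV.
set x := (alpha j)%:P; set D := shift_poly i i' T z.
rewrite /share_poly noise_poly_shift !hornerE mulrDr addrA take_polyD.
rewrite take_polyMr take_horner_take_coefs ?size_shift_poly // -take_polyMr.
rewrite horner_shift_poly // -take_polyD.
have -> : (1 - 'X * x) * ((sel i z - sel i' z) * x ^+ t * geom_sum l x)
   = (sel i z - sel i' z) * x ^+ t + (- (sel i z - sel i' z) * x ^+ t * x ^+ l) * 'X^l.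
  by rewrite mulrCA -mulrA mul_mask_geom_sum exprMn; ring.
by rewrite addrA take_polyD take_polyMXn_0 addr0; congr (take_poly l _); ring.
Qed.

End Scheme.

Local Close Scope ring_scope.

Section FinEncoding.
Variables (X Y : finType).

Definition fin_inj (h : #|X| <= #|Y|) (x : X) : Y := enum_val (widen_ord h (enum_rank x)).

Lemma fin_inj_inj h : injective (fin_inj h).
Proof. by move=> x y /enum_val_inj /(congr1 val) eq_xy; apply/enum_rank_inj/val_inj. Qed.

Definition fin_bij (h : #|X| = #|Y|) (x : X) : Y := enum_val (cast_ord h (enum_rank x)).

End FinEncoding.

Lemma fin_bijK (X Y : finType) (h : #|X| = #|Y|) : cancel (fin_bij h) (fin_bij (esym h)).
Proof. by move=> x; rewrite /fin_bij enum_valK cast_ordK enum_rankK. Qed.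

Lemma fin_bijKV (X Y : finType) (h : #|X| = #|Y|) : cancel (fin_bij (esym h)) (fin_bij h).
Proof. by move=> y; rewrite /fin_bij enum_valK cast_ordKV enum_rankK. Qed.

Section BitEncoding.
Variables (X : finType) (b : nat) (h : #|X| = #|{: b.-tuple bool}|).

Definition bits_of (x : X) : seq bool := val (fin_bij h x).
Definition of_bits (s : seq bool) : X := fin_bij (esym h) (insubd (nseq_tuple b false) s).

Lemma bits_ofK : cancel bits_of of_bits.
Proof. by move=> x; rewrite /of_bits /bits_of valKd fin_bijK. Qed.

Lemma size_bits_of x : size (bits_of x) = b.
Proof. exact: size_tuple. Qed.

End BitEncoding.

Lemma bigmax_const (I : finType) (F : I -> nat) c :
  (0 < #|I|)%N -> (forall i, F i = c) -> \max_i F i = c.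
Proof. by move=> I_gt0 Fc; have [i0 ->] := eq_bigmax F I_gt0. Qed.

Lemma card_tuple_bool b : #|{: b.-tuple bool}| = 2 ^ b.
Proof. by rewrite card_tuple card_bool. Qed.

Section Protocol.
Variables (F : finFieldType) (m l t d n N k w : nat).
Hypotheses (cardF : #|F| = 2 ^ m) (l_gt0 : 0 < l) (k_eq : d * t + l = k)
  (N_gt0 : 0 < N) (k_le : k <= 2 ^ m) (N_le : N <= n ^ d).

Lemma card_share : #|share_t F l d n| = #|{: (m * l * (d * n)).-tuple bool}|.
Proof.
by rewrite card_ffun card_mx card_prod !card_ord cardF card_tuple_bool -!expnM mul1n mulnA.
Qed.

Lemma card_answer : #|{ffun 'I_w -> F}| = #|{: (m * w).-tuple bool}|.
Proof. by rewrite card_ffun card_ord cardF card_tuple_bool -expnM. Qed.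

Lemma card_record : #|{ffun 'I_w -> 'rV[F]_l}| = #|{: (w * l * m).-tuple bool}|.
Proof.
by rewrite card_ffun card_mx !card_ord cardF card_tuple_bool -!expnM mul1n; congr (2 ^ _); lia.
Qed.

Lemma card_points : #|'I_k| <= #|F|.
Proof. by rewrite card_ord cardF. Qed.

Lemma card_cells : #|'I_N| <= #|{ffun 'I_d -> 'I_n}|.
Proof. by rewrite card_ffun !card_ord. Qed.

Definition alpha : 'I_k -> F := fin_inj card_points.
Definition code : 'I_N -> {ffun 'I_d -> 'I_n} := fin_inj card_cells.

Lemma alpha_inj : injective alpha. Proof. exact: fin_inj_inj. Qed.
Lemma code_inj : injective code. Proof. exact: fin_inj_inj. Qed.

Definition record_of (x : (w * l * m).-tuple bool) : {ffun 'I_w -> 'rV[F]_l} :=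
  fin_bij (esym card_record) x.

Definition pir_share (i : 'I_N) (r : noise_t F l t d n) (j : 'I_k) : seq bool :=
  bits_of card_share (share_at code i r (alpha j)).

Definition pir_eval (j : 'I_k) (f : {ffun 'I_N -> (w * l * m).-tuple bool}) (s : seq bool) :=
  bits_of card_answer
    [ffun c => answer_at code (fun i => record_of (f i) c) (alpha j) (of_bits card_share s)].

Definition pir_recon (i : 'I_N) (r : noise_t F l t d n) (ys : 'I_k -> seq bool) :=
  fin_bij card_record [ffun c => (\row_e
    (interpolate alpha (fun j => of_bits card_answer (ys j) c))`_((d * t + (l.-1 - e))%N))%R].

Definition pir : PIR k N (w * l * m) := MkPIR pir_share pir_eval pir_recon.

Lemma pir_is_correct : pir_correct pir.
Proof.
move=> f i0 r /=; rewrite /pir_recon -[RHS](fin_bijKV card_record); congr (fin_bij _ _).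
apply/ffunP => c; apply/rowP => e; rewrite !ffunE mxE.
have [G [sG coefG evalG]] :=
  answer_at_share l_gt0 code_inj (fun i => record_of (f i) c) i0 r.
have sG' : size G <= k by rewrite -k_eq.
rewrite -coefG -(interpolate_unique alpha_inj sG') // => j.
by rewrite /pir_eval /pir_share (bits_ofK card_answer) ffunE (bits_ofK card_share) evalG.
Qed.

Lemma pir_is_private : pir_private pir t.
Proof.
move=> T card_T i i' v /=.
rewrite -[RHS](card_preimset _ (addIr (shift l t code alpha i i' T))); apply: eq_card => r.
rewrite !inE; apply: eq_forallb_in => j jT.
by rewrite /pir_share (share_at_shift code alpha_inj).
Qed.

Lemma pir_is_PIR : is_PIR pir t.
Proof.
split; [|exact: pir_is_correct|exact: pir_is_private].
by apply/card_gt0P; exists 0%R.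
Qed.

Lemma pir_upload : upload pir = k * (m * l * (d * n)).
Proof.
have I_gt0 : 0 < #|'I_N| by rewrite card_ord.
have R_gt0 : 0 < #|rand pir| by apply/card_gt0P; exists 0%R.
apply: bigmax_const I_gt0 _ => i; apply: bigmax_const R_gt0 _ => r.
under eq_bigr do rewrite /= /pir_share size_bits_of.
by rewrite sum_nat_const card_ord.
Qed.

Lemma pir_download : download pir = k * (m * w).
Proof.
have D_gt0 : 0 < #|{ffun 'I_N -> (w * l * m).-tuple bool}|.
  by apply/card_gt0P; exists [ffun=> [tuple of nseq _ false]].
have I_gt0 : 0 < #|'I_N| by rewrite card_ord.
have R_gt0 : 0 < #|rand pir| by apply/card_gt0P; exists 0%R.
apply: bigmax_const D_gt0 _ => f; apply: bigmax_const I_gt0 _ => i.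
apply: bigmax_const R_gt0 _ => r.
under eq_bigr do rewrite /= /pir_eval size_bits_of.
by rewrite sum_nat_const card_ord.
Qed.

End Protocol.

(* [all_algebra] bound [%R] to [ring_scope]; the statement is about Stdlib reals. *)
Delimit Scope R_scope with R.

Theorem mainTheorem8 :
  exists C : R, (0 < C)%R /\
  forall d t k w N : nat,
    0 < d -> 0 < t -> 0 < k -> 0 < w -> 0 < N -> d * t + 1 <= k ->
    exists P : PIR k N (w * (k - d * t) * clog2 k),
      is_PIR P t /\
      (INR (upload P) <= C * INR k ^ 3 * ln (INR k) * Rpower (INR N) (/ INR d))%R /\
      download P = w * k * clog2 k /\
      download_rate P = (1 - INR (d * t) / INR k)%R.
Proof.
exists 8%R; split=> [|d t k w N d_gt0 t_gt0 k_gt0 w_gt0 N_gt0 dt_lt_k]; first lra.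
set l := k - d * t; set m := clog2 k.
have k_eq : d * t + l = k by rewrite subnKC //; lia.
have l_gt0 : 0 < l by rewrite subn_gt0; lia.
have k_ge2 : 2 <= k by have := muln_gt0 d t; rewrite d_gt0 t_gt0; lia.
have d_le_k : d <= k by have := leq_pmulr d t_gt0; lia.
have m_gt0 : 0 < m by rewrite up_log_gt0.
have [F _ cardF] := @pPrimePowerField 2 m (isT : prime 2) m_gt0.
have k_le : k <= 2 ^ m by apply: up_logP.
have [n [n_gt0 N_le lt_N]] := exists_ceil_root d_gt0 N_gt0.
exists (pir w cardF l_gt0 k_eq N_gt0 k_le N_le); split; first exact: pir_is_PIR.
split; last split.
- rewrite pir_upload; apply: upload_bound; rewrite ?leq_subr //.
    exact: clog2_le_ln.
  exact: ceil_root_le_Rpower.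
- by rewrite pir_download; lia.
- by rewrite /download_rate pir_download; apply: rate_eq.
Qed.
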